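(* Let $n\geq 5$ be an odd integer, $m=\frac{n+1}{2}$, and let $(D;H)$ be a based diagram of $(K_n;H)$ with $H=v_1v_2\cdots v_nv_1$ such that $M(D;H)=M_n$. Then $$c_D(e_{(m,n)})=c_D(e_{(1,m)})+c_D(e_{(2,n)})+1.$$
   Context: $K_n$ is the complete graph with vertices $v_1,\dots,v_n$, lying on $H$ in this cyclic order. A based diagram $(D;H)$ of $(K_n;H)$ is a diagram of $K_n$ on $S^2$ in which $H$ is drawn on the equator and every other edge diagram lies (apart from its endpoints) in the Northern or Southern Hemisphere; as in the paper's drawings, the edges in each hemisphere are drawn so that two edge diagrams not in $H$ intersect in their interiors if and only if they lie in the same hemisphere and their endpoints alternate along $H$. $e_{(i,j)}$ denotes the edge diagram joining $v_i,v_j$, and for an edge diagram $e$, $c_D(e)$ is the number of edge diagrams of $D$ that intersect the interior of $e$. The matrix $M(D;H)=(a_{(i,j)})$ has $a_{(i,j)}=0$ if $j\le i+1$ or $(i,j)=(1,n)$, and otherwise $a_{(i,j)}=1$ (resp. $-1$) if $e_{(i,j)}$ is in the Northern (resp. Southern) Hemisphere. For odd $n$, $M_n=(a_{(i,j)})$ is the $n\times n$ matrix with $a_{(i,j)}=0$ if $j\le i+1$ or $(i,j)=(1,n)$; otherwise $a_{(i,j)}=1$ if ($j\ge i+2$ and $\frac{n+3}{2}-i\le j\le n-i$) or ($j\ge i+2$ and $j\ge\frac{3n+1}{2}-i$); and $a_{(i,j)}=-1$ in all other cases. *)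

From mathcomp Require Import all_boot all_order all_algebra.
Set Implicit Arguments. Unset Strict Implicit. Unset Printing Implicit Defensive.
Import GRing.Theory Num.Theory.

(* Vertices of K_n are the naturals 1..n, lying on H = v_1 v_2 ... v_n v_1 in
   this cyclic order.  An edge of K_n is a pair (i,j) with 1 <= i < j <= n. *)

Definition is_edge (n i j : nat) : bool := [&& 0 < i, i < j & j <= n].

Definition in_H (n i j : nat) : bool := (j == i.+1) || ((i == 1) && (j == n)).

(* A based diagram (D;H) of (K_n;H): H drawn on the equator, every other edge
   diagram e_(i,j) lies in the Northern (true) or Southern (false) hemisphere.
   Edges in each hemisphere are drawn as in the paper, so that two edge
   diagrams not in H cross in their interiors iff they are in the same
   hemisphere and their endpoints alternate along H.  Hence a based diagram
   is determined by its hemisphere assignment. *)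
Record based_diagram (n : nat) := BasedDiagram { north : nat -> nat -> bool }.

Definition alternate (i j k l : nat) : bool :=
  [&& i < k, k < j & j < l] || [&& k < i, i < l & l < j].

Definition meets_interior n (D : based_diagram n) (i j k l : nat) : bool :=
  [&& ~~ in_H n i j, ~~ in_H n k l, north D i j == north D k l
    & alternate i j k l].

Definition cD n (D : based_diagram n) (i j : nat) : nat :=
  \sum_(1 <= k < n.+1) \sum_(1 <= l < n.+1)
     (is_edge n k l && meets_interior D i j k l).

Definition MD n (D : based_diagram n) (i j : nat) : int :=
  if (j <= i.+1) || ((i == 1) && (j == n)) then 0%R
  else if north D i j then 1%R else (-1)%R.

Definition Mn (n i j : nat) : int :=
  if (j <= i.+1) || ((i == 1) && (j == n)) then 0%R
  else if ((i + 2 <= j) && ((n + 3) %/ 2 - i <= j <= n - i))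
          || ((i + 2 <= j) && ((3 * n + 1) %/ 2 - i <= j))
  then 1%R else (-1)%R.

From mathcomp Require Import all_boot all_order all_algebra.
From mathcomp Require Import zify.

Set Implicit Arguments.
Unset Strict Implicit.

(* Write n = 2p + 1, so m = p + 1. Crossings only depend on the hemispheres of
   the edges off H, so D may be replaced by the diagram read off M_n, in which
   e_(k,l) is northern iff p + 2 <= k + l <= n or 3p + 2 <= k + l. In that
   diagram e_(m,n) is crossed by the e_(k,l) with k <= p and p + 2 <= l <= n - k,
   i.e. by p - k edges for each k in [1, p]; e_(1,m) by the same edges with
   k >= 2; and e_(2,n) by the p - 2 edges e_(1,l), 3 <= l <= p. Dropping the
   row k = 1 from the first count leaves p - 1 = (p - 2) + 1. *)

Lemma sum_nat_itv_indicator (a b c d : nat) :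
  \sum_(a <= l < b) (c <= l < d : nat) = minn b d - maxn a c.
Proof.
elim: b => [|b IHb]; first by rewrite big_geq //; lia.
have [a_le_b | b_lt_a] := leqP a b; last by rewrite big_geq //; lia.
by rewrite big_nat_recr //= IHb; case: (c <= b < d) / idP; lia.
Qed.

Lemma sum_rows_itv (n a b : nat) (c d : nat -> nat) (F : nat -> nat -> bool) :
  1 <= a -> b <= n.+1 ->
  (forall k, a <= k < b -> 1 <= c k /\ d k <= n.+1) ->
  (forall k l, 1 <= k <= n -> 1 <= l <= n ->
     F k l = [&& a <= k < b & c k <= l < d k]) ->
  \sum_(1 <= k < n.+1) \sum_(1 <= l < n.+1) (F k l : nat)
    = \sum_(a <= k < b) (d k - c k).
Proof.
move=> a_ge1 b_le F_rows F_eq.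
rewrite (big_nat_widen _ _ _ _ _ b_le) (big_nat_widenl _ _ _ _ _ a_ge1).
rewrite big_mkcond; apply: eq_big_nat => k k_in /=.
under eq_big_nat => l l_in do rewrite F_eq //.
rewrite [(k < b) && _]andbC; case: ifP => [k_ab | k_nab]; last first.
  by rewrite big1 // => l _; rewrite k_nab.
rewrite sum_nat_itv_indicator; have := F_rows k k_ab; lia.
Qed.

Lemma cD_ext n (D D' : based_diagram n) (i j : nat) :
  (forall k l, is_edge n k l -> ~~ in_H n k l -> north D k l = north D' k l) ->
  is_edge n i j -> cD D i j = cD D' i j.
Proof.
move=> north_eq ij_edge; apply: eq_big_nat => k _; apply: eq_big_nat => l _.
rewrite /meets_interior.
case kl_edge: (is_edge n k l) => //=.
case: (in_H n i j) / idP => //= /negP ij_offH.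
case: (in_H n k l) / idP => //= /negP kl_offH.
by rewrite !north_eq.
Qed.

Lemma north_MD n (D : based_diagram n) (k l : nat) :
  is_edge n k l -> ~~ in_H n k l -> north D k l = (MD D k l == 1%R).
Proof.
rewrite /is_edge /in_H /MD => kl_edge kl_offH.
by rewrite ifF; [case: (north D k l) | lia].
Qed.

Definition Mn_diagram (n : nat) : based_diagram n :=
  BasedDiagram n (fun i j => Mn n i j == 1%R).

Lemma cD_Mn n (D : based_diagram n) (i j : nat) :
  (forall i j, 1 <= i <= n -> 1 <= j <= n -> MD D i j = Mn n i j) ->
  is_edge n i j -> cD D i j = cD (Mn_diagram n) i j.
Proof.
move=> MD_Mn; apply: cD_ext => k l kl_edge kl_offH.
by rewrite north_MD // MD_Mn //; move: kl_edge; rewrite /is_edge; lia.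
Qed.

Section OddOrder.

Variable p : nat.

Local Notation n := (2 * p + 1).
Local Notation D := (Mn_diagram n).

Definition north_odd (k l : nat) : bool :=
  (p + 2 <= k + l <= n) || (3 * p + 2 <= k + l).

Lemma north_Mn_odd (k l : nat) :
  is_edge n k l -> ~~ in_H n k l -> north D k l = north_odd k l.
Proof.
rewrite /is_edge /in_H /north_odd /= /Mn => kl_edge kl_offH.
rewrite ifF; last by lia.
have -> : (2 * p + 1 + 3) %/ 2 = p + 2 by lia.
have -> : (3 * (2 * p + 1) + 1) %/ 2 = 3 * p + 2 by lia.
by case: ifP => cond /=; lia.
Qed.

Lemma meets_interior_Mn_odd (i j k l : nat) :
  is_edge n i j -> ~~ in_H n i j ->
  is_edge n k l && meets_interior D i j k l =
  [&& is_edge n k l, ~~ in_H n k l, north_odd i j == north_odd k l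
    & alternate i j k l].
Proof.
move=> ij_edge ij_offH; rewrite /meets_interior ij_offH.
case kl_edge: (is_edge n k l) => //.
case kl_H: (in_H n k l) => //.
by rewrite !north_Mn_odd ?kl_H.
Qed.

Lemma cD_Mn_odd (i j a b : nat) (c d : nat -> nat) :
  is_edge n i j -> ~~ in_H n i j -> 1 <= a -> b <= n.+1 ->
  (forall k, a <= k < b -> 1 <= c k /\ d k <= n.+1) ->
  (forall k l, 1 <= k <= n -> 1 <= l <= n ->
     [&& is_edge n k l, ~~ in_H n k l, north_odd i j == north_odd k l
       & alternate i j k l] = [&& a <= k < b & c k <= l < d k]) ->
  cD D i j = \sum_(a <= k < b) (d k - c k).
Proof.
move=> ij_edge ij_offH a_ge1 b_le rows_ok rows_eq.
apply: sum_rows_itv => // k l k_in l_in.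
by rewrite meets_interior_Mn_odd // rows_eq.
Qed.

Hypothesis p_ge2 : 2 <= p.

Ltac crossing_arith := rewrite /is_edge /in_H /north_odd /alternate /=; lia.

Lemma cD_mid_last : cD D (p + 1) n = \sum_(1 <= k < p + 1) (p - k).
Proof.
rewrite (@cD_Mn_odd _ _ 1 (p + 1) (fun _ => p + 2) (fun k => n + 1 - k));
  try by intros; crossing_arith.
by apply: eq_big_nat => k k_in; lia.
Qed.

Lemma cD_first_mid : cD D 1 (p + 1) = \sum_(2 <= k < p + 1) (p - k).
Proof.
rewrite (@cD_Mn_odd _ _ 2 (p + 1) (fun _ => p + 2) (fun k => n + 1 - k));
  try by intros; crossing_arith.
by apply: eq_big_nat => k k_in; lia.
Qed.

Lemma cD_second_last : cD D 2 n = p - 2.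
Proof.
rewrite (@cD_Mn_odd _ _ 1 2 (fun _ => 3) (fun _ => p + 1));
  try by intros; crossing_arith.
by rewrite big_nat1; lia.
Qed.

End OddOrder.

Theorem lemma3p2 (n : nat) (D : based_diagram n) :
  5 <= n -> odd n ->
  (forall i j, 1 <= i <= n -> 1 <= j <= n -> MD D i j = Mn n i j) ->
  let m := n.+1 %/ 2 in
  cD D m n = cD D 1 m + cD D 2 n + 1.
Proof.
move=> n_ge5 n_odd MD_Mn m.
have [p n_eq] : exists p, n = 2 * p + 1.
  by exists n./2; rewrite -{1}(odd_double_half n) n_odd -muln2; lia.
subst n; have p_ge2 : 2 <= p by lia.
have -> : m = p + 1 by rewrite /m; lia.
rewrite !(cD_Mn MD_Mn) /is_edge; try lia.
rewrite cD_mid_last // cD_first_mid // cD_second_last //.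
rewrite big_ltn; last by lia.
lia.
Qed.
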